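(* Let $n\ge 3$, $4\le m<\infty$, $I=\{1,\dots,n\}$, $\Gamma$ an $n$-dimensional vector space over a countably infinite skew field, and $\Delta_0=(V,\tau,* )$ as below. Let $\Delta=(W,\tau,* )$ be a geometry over $I$ containing $\Delta_0$ as an induced subgeometry and satisfying Properties (F), (I), (V), (P), (H), (C). Let $z$ be an element of type $n-2$ and let $x,y$ be elements of types in $\{n-1,n\}$ incident with $z$, of the same type if $m$ is odd and of different types if $m$ is even, at distance at least $m+1$ (possibly infinite) in the incidence graph of the rank 2 geometry of elements of types $n-1,n$ incident with $z$. Construct $\Delta'=(W',\tau,* )$ as follows. Consider a path $\gamma=(x_0:=x,x_1,\dots,x_{m-2},x_{m-1}:=y)$ with types alternating between $n-1$ and $n$. If $x$ has type $n$, $x_1$ is taken to be an existing element of type $n-1$ incident with $x$ and $z$ such that $x$ is the only type-$n$ element incident with $x_1$ (such an element exists); similarly, if $y$ has type $n$, $x_{m-2}$ is an existing element of type $n-1$ incident with $y$ and $z$ such that $y$ is the only type-$n$ element incident with it. All other inner vertices of $\gamma$ are new elements. To each new element of type $n-1$ on $\gamma$ assign a precursor: an element of type $n-1$ of $\Delta_0$ incident with $z$, chosen so that the type-$(n-1)$ elements of $\gamma$ have pairwise distinct precursors. A new type-$(n-1)$ element of $\gamma$ is incident exactly with its neighbours on $\gamma$ and with the elements of type $\le n-2$ incident with its precursor. Further, for each new element $x_i$ of type $n$ on $\gamma$ and each element $a$ of type $n-1$ of $\Delta_0$ that is not the precursor of $x_{i-1}$ or $x_{i+1}$, add a new element of type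 $n-1$ with precursor $a$, incident exactly with $x_i$ and with the elements of type $\le n-2$ incident with $a$. Each new element of type $n$ is incident exactly with its neighbours on $\gamma$, all elements of type $\le n-2$, and the new type-$(n-1)$ elements attached to it in the previous sentence. Incidences among elements of $W$ are unchanged. Then $\Delta'$ satisfies Properties (F), (I), (V), (P), (H), (C).
   Context: A geometry over $I$ is a triple $(V,\tau,* )$ with $\tau:V\to I$ and $*$ a symmetric relation such that elements of equal type are incident iff equal. A rank 2 geometry (bipartite incidence graph) is without $k$-gons if it has no cycle of length $2k$. $\Delta_0=(V,\tau,* )$ is the geometry over $I$ whose elements of type $i<n$ are the $i$-dimensional subspaces of $\Gamma$, with no elements of type $n$, two elements being incident iff one subspace contains the other. Properties of $\Delta=(W,\tau,* )\supseteq\Delta_0$: (F) Elements of types $i$ and $n$ with $i\le n-2$ are always incident. (I) There are finitely many elements of type $n$, and $W$ is countable. (V) Every element of $W\setminus V$ has type $n-1$ or $n$. (P) For every element $z$ of type $n-2$, the elements of types $n-1$ and $n$ incident with $z$ form a rank 2 geometry without $k$-gons for all $k<m$. (H) For every element $x$ of type $n-1$, there is an element $y$ of type $n-1$ of $\Delta_0$ (the precursor of $x$) such that $x$ and $y$ are incident with exactly the same elements of types $1,\dots,n-2$. (C) For every element $x$ of type $n$ and every element $y$ of type $n-1$ of $\Delta_0$, there is a unique element of type $n-1$ with precursor $y$ incident with $x$. *)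

From HB Require Import structures.
From mathcomp Require Import all_boot all_order all_algebra.
From Stdlib Require Import List.
Set Implicit Arguments. Unset Strict Implicit. Unset Printing Implicit Defensive.
Import GRing.Theory.
Local Open Scope ring_scope.

(* Gamma = R^n (row vectors), R a skew field; left scalars act by c *m B. *)

Definition is_subsp_dim (R : unitRingType) (n i : nat) (S : 'rV[R]_n -> Prop) :=
  exists B : 'M[R]_(i, n),
    (forall c : 'rV[R]_i, c *m B = 0 -> c = 0) /\
    (forall v, S v <-> exists c : 'rV[R]_i, v = c *m B).

(* Elements of Delta_0: i-dimensional subspaces with 1 <= i < n; the type is sdim. *)
Record Subsp (R : unitRingType) (n : nat) := MkSub {
  sdim : nat;
  sset : 'rV[R]_n -> Prop;
  sdim_ok : (0 < sdim < n)%N;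
  sset_ok : @is_subsp_dim R n sdim sset }.

Definition Sinc (R : unitRingType) (n : nat) (A B : Subsp R n) :=
  (forall v, sset A v -> sset B v) \/ (forall v, sset B v -> sset A v).

Local Close Scope ring_scope.

Section Geom.
Variables (R : unitRingType) (n : nat).
Local Notation V := (Subsp R n).
Variables (W : Type) (tau : W -> nat) (inc : W -> W -> Prop) (emb : V -> W).

Definition is_geometry :=
  (forall a b, inc a b -> inc b a) /\
  (forall a, 1 <= tau a <= n) /\
  (forall a b, tau a = tau b -> (inc a b <-> a = b)).

Definition induced_sub :=
  injective emb /\ (forall v, tau (emb v) = sdim v) /\
  (forall u v, inc (emb u) (emb v) <-> Sinc u v).

Definition propF := forall a b, tau a <= n - 2 -> tau b = n -> inc a b.

Definition propI :=
  (exists l : list W, forall w, tau w = n -> List.In w l) /\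
  (exists f : W -> nat, injective f).

Definition propV := forall w, (forall v, emb v <> w) -> tau w = n - 1 \/ tau w = n.

Definition res (z a : W) := (tau a = n - 1 \/ tau a = n) /\ inc a z.

Definition has_kgon (z : W) (k : nat) :=
  exists f : nat -> W,
    (forall i j, i < 2 * k -> j < 2 * k -> f i = f j -> i = j) /\
    (forall i, i < 2 * k -> res z (f i)) /\
    (forall i, i < 2 * k -> inc (f i) (f (i.+1 %% (2 * k)))).

Definition propP (m : nat) :=
  forall z, tau z = n - 2 -> forall k, 2 <= k < m -> ~ has_kgon z k.

Definition prec (x : W) (y : V) :=
  sdim y = n - 1 /\
  forall w, 1 <= tau w <= n - 2 -> (inc x w <-> inc (emb y) w).

Definition propH := forall x, tau x = n - 1 -> exists y, prec x y.

Definition propC :=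
  forall x, tau x = n -> forall y : V, sdim y = n - 1 ->
    exists! u, tau u = n - 1 /\ prec u y /\ inc x u.

Definition props (m : nat) := propF /\ propI /\ propV /\ propP m /\ propH /\ propC.

Definition res_path (z : W) (l : nat) (a b : W) :=
  exists f : nat -> W, f 0 = a /\ f l = b /\
    (forall i, i <= l -> res z (f i)) /\
    (forall i, i < l -> inc (f i) (f i.+1)).

Definition dist_ge (z : W) (d : nat) (a b : W) :=
  forall l, l < d -> ~ res_path z l a b.

End Geom.

Inductive raw (W V : Type) :=
| Old of W
| PNew of nat         (* the new inner vertex x_i of the path gamma *)
| Att of nat & V.     (* the new type n-1 element attached to x_i with precursor a *)
Arguments Old {W V}. Arguments PNew {W V}. Arguments Att {W V}.

Section Construction.
Variables (R : unitRingType) (n m : nat).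
Local Notation V := (Subsp R n).
Variables (W : Type) (tau : W -> nat) (inc : W -> W -> Prop) (emb : V -> W).
(* z, the endpoints x, y, the existing elements x1e (used as x_1 when
   tau x = n) and xm2e (used as x_{m-2} when tau y = n), and the precursor
   assignment pc : positions on gamma -> type n-1 elements of Delta_0. *)
Variables (z x y x1e xm2e : W) (pc : nat -> V).

Definition ptyp (i : nat) := if odd i then (if tau x == n then n - 1 else n) else tau x.

Definition isNew (i : nat) :=
  [/\ 1 <= i, i <= m - 2, ~ (i = 1 /\ tau x = n) & ~ (i = m - 2 /\ tau y = n)].

Definition rv (i : nat) : raw W V :=
  if i == 0 then Old x
  else if i == m - 1 then Old y
  else if (i == 1) && (tau x == n) then Old x1e
  else if (i == m - 2) && (tau y == n) then Old xm2e
  else PNew i.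

Definition valid (r : raw W V) : Prop :=
  match r with
  | Old _ => True
  | PNew i => isNew i
  | Att i a => [/\ isNew i, ptyp i = n, sdim a = n - 1,
                  a <> pc i.-1 & a <> pc i.+1]
  end.

Definition tauR (r : raw W V) : nat :=
  match r with
  | Old w => tau w
  | PNew i => ptyp i
  | Att _ _ => n - 1
  end.

Definition baseR (r s : raw W V) : Prop :=
  match r with
  | Old a => exists b, s = Old b /\ inc a b
  | PNew i =>
      s = rv i.-1 \/ s = rv i.+1 \/
      (exists w, s = Old w /\ tau w <= n - 2 /\
                 (ptyp i = n \/ inc (emb (pc i)) w)) \/
      (ptyp i = n /\ exists a, s = Att i a)
  | Att i a =>
      s = PNew i \/ (exists w, s = Old w /\ tau w <= n - 2 /\ inc (emb a) w)
  end.

Definition incR (r s : raw W V) := r = s \/ baseR r s \/ baseR s r.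

Definition W' := {r : raw W V | valid r}.
Definition tau' (r : W') : nat := tauR (proj1_sig r).
Definition inc' (r s : W') : Prop := incR (proj1_sig r) (proj1_sig s).
Definition emb' (v : V) : W' := exist valid (Old (emb v)) I.

Definition choices_ok :=
  (tau x = n -> [/\ tau x1e = n - 1, inc x1e x, inc x1e z &
                 forall w, tau w = n -> inc x1e w -> w = x]) /\
  (tau y = n -> [/\ tau xm2e = n - 1, inc xm2e y, inc xm2e z &
                 forall w, tau w = n -> inc xm2e w -> w = y]) /\
  (forall i, i <= m - 1 -> ptyp i = n - 1 ->
     [/\ sdim (pc i) = n - 1, inc (emb (pc i)) z &
         forall w, rv i = Old w -> @prec R n W tau inc emb w (pc i)]) /\
  (forall i j, i <= m - 1 -> j <= m - 1 -> ptyp i = n - 1 -> ptyp j = n - 1 ->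
     pc i = pc j -> i = j).

End Construction.

From HB Require Import structures.
From mathcomp Require Import all_boot all_order all_algebra.
From Pilot Require Import Defs.
From mathcomp Require Import zify.
From Stdlib Require List.
From Stdlib Require Import ClassicalEpsilon Classical FunctionalExtensionality.
From Stdlib Require Import PropExtensionality ProofIrrelevance.
Set Implicit Arguments. Unset Strict Implicit. Unset Printing Implicit Defensive.
Import GRing.Theory.

(* Only new elements can create short cycles in the residue of an element z'
   of type n-2 of Delta'.  A new element of type n-1 attached to a new x_i is
   incident with no other element of type n, so it lies on no cycle; hence a
   cycle through a new element runs along the whole new part of gamma, from
   x_lo to x_hi (the last old elements at either end of gamma).  These have
   distinct precursors, i.e. distinct hyperplanes of Gamma, whose only common
   (n-2)-space is that of z, so z' = z.  The rest of the cycle is a walk from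
   x_hi back to x_lo in the residue of z in Delta, which is too short for the
   distance between x and y.  The remaining properties are local checks; for
   (C) at a new x_i the neighbours x_{i-1}, x_{i+1} have distinct precursors. *)

Local Open Scope ring_scope.

Section DivisionRing.
Variable R : unitRingType.
Hypothesis unitR : forall a : R, a != 0 -> a \is a GRing.unit.

(* Gaussian elimination on the last coordinate, done on index lists so that
   the induction on the number [d] of coordinates needs no dependent types. *)
Lemma nontrivial_relation (T : eqType) (d : nat) (J : seq T) (C : T -> nat -> R) :
  uniq J -> (d < size J)%N ->
  exists c : T -> R, (exists2 j, j \in J & c j != 0) /\
    forall k, (k < d)%N -> \sum_(j <- J) c j * C j k = 0.
Proof.
elim: d J C => [|d IH] J C uJ sJ.
  case: J uJ sJ => [//|j0 J] _ _.
  by exists (fun _ => 1); split=> //; exists j0; rewrite ?inE ?eqxx ?oner_neq0.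
have [/hasP[j0 j0J Cj0]|/hasPn C0] := boolP (has (fun j => C j d != 0) J); last first.
  have [c [cj Hc]] := IH J C uJ (ltnW sJ).
  exists c; split=> // k; rewrite ltnS leq_eqVlt => /orP[/eqP ->|kd]; last exact: Hc.
  by apply: big1_seq => j /C0; rewrite negbK => /eqP ->; rewrite mulr0.
set u := (C j0 d)^-1.
pose C' j k := C j k - C j d * u * C j0 k.
have [c' [[j1 j1J cj1] Hc']] : exists c' : T -> R,
    (exists2 j, j \in rem j0 J & c' j != 0) /\
    forall k, (k < d)%N -> \sum_(j <- rem j0 J) c' j * C' j k = 0.
  by apply: IH; rewrite ?rem_uniq // size_rem // -ltnS (ltn_predK sJ).
pose S := \sum_(j <- rem j0 J) c' j * C j d.
exists (fun j => if j == j0 then - (S * u) else c' j); split.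
  move: j1J; rewrite (mem_rem_uniq _ uJ) inE => /andP[j1n j1J].
  by exists j1 => //; rewrite (negbTE j1n).
move=> k kd; rewrite (perm_big _ (perm_to_rem j0J)) big_cons eqxx.
rewrite (eq_big_seq (fun j => c' j * C j k)); last first.
  by move=> j; rewrite (mem_rem_uniq _ uJ) inE => /andP[/negbTE -> _].
have -> : \sum_(j <- rem j0 J) c' j * C j k =
    \sum_(j <- rem j0 J) c' j * C' j k + S * u * C j0 k.
  rewrite /S !big_distrl /= -big_split /=; apply: eq_bigr => j _.
  by rewrite /C' mulrBr !mulrA subrK.
have -> : \sum_(j <- rem j0 J) c' j * C' j k = 0.
  move: kd; rewrite ltnS leq_eqVlt => /orP[/eqP ->|kd]; last exact: Hc'.
  apply: big1 => j _.
  by rewrite /C' -[_ * u * _]mulrA /u (mulVr (unitR Cj0)) mulr1 subrr mulr0.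
by rewrite /= add0r mulNr addNr.
Qed.

Lemma mx_rows_dependent e d (M : 'M[R]_(e, d)) :
  (d < e)%N -> exists2 c : 'rV_e, c != 0 & c *m M = 0.
Proof.
move=> lt_de.
pose C (j : 'I_e) (k : nat) := if insub k is Some k' then M j k' else 0.
have [|c [[j0 _ cj0] Hc]] := @nontrivial_relation _ d (enum (ordinal e)) C (enum_uniq _).
  by rewrite size_enum_ord.
exists (\row_j c j); first by apply/eqP => /rowP/(_ j0); rewrite !mxE => c0; rewrite c0 eqxx in cj0.
apply/rowP => k; rewrite !mxE -[RHS](Hc k (ltn_ord k)) big_enum /=.
by apply: eq_bigr => j _; rewrite mxE /C valK.
Qed.

Lemma rows_dependent_in_span e d n (B : 'M[R]_(e, n)) (A : 'M[R]_(d, n)) :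
  (d < e)%N -> (forall j, exists c : 'rV_d, row j B = c *m A) ->
  exists2 c : 'rV_e, c != 0 & c *m B = 0.
Proof.
move=> lt_de /(_ _)/constructive_indefinite_description rowB.
pose C := \matrix_j sval (rowB j).
have defB : B = C *m A.
  by apply/row_matrixP => j; rewrite row_mul rowK; exact: svalP (rowB j).
have [c c0 cC] := mx_rows_dependent C lt_de.
by exists c; rewrite // defB mulmxA cC mul0mx.
Qed.

End DivisionRing.

Section Subspaces.
Variables (R : unitRingType) (n : nat).
Hypothesis unitR : forall a : R, a != 0 -> a \is a GRing.unit.
Implicit Types (S T : 'rV[R]_n -> Prop) (v : 'rV[R]_n) (a b p q s : Subsp R n).

Definition rows_indep d (B : 'M[R]_(d, n)) := forall c : 'rV[R]_d, c *m B = 0 -> c = 0.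

Lemma subsp_dim_le d e S T : is_subsp_dim d S -> is_subsp_dim e T ->
  (forall v, T v -> S v) -> (e <= d)%N.
Proof.
move=> [BS [_ defS]] [BT [indT defT]] TS; rewrite leqNgt; apply/negP => lt_de.
have [|c c0 cB] := rows_dependent_in_span unitR (B := BT) (A := BS) lt_de.
  move=> j; apply/defS/TS/defT.
  by exists (delta_mx 0 j); rewrite rowE.
by case/eqP: c0; exact: indT.
Qed.

Lemma mul_col_mx1 d (B : 'M[R]_(d, n)) v (c : 'rV[R]_(d + 1)) :
  c *m col_mx B v = lsubmx c *m B + rsubmx c 0 0 *: v.
Proof. by rewrite -{1}[c]hsubmxK mul_row_col {1}[rsubmx c]mx11_scalar mul_scalar_mx. Qed.

Lemma rows_indep_col_mx d (B : 'M[R]_(d, n)) v : rows_indep B ->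
  ~ (exists c, v = c *m B) -> rows_indep (col_mx B v).
Proof.
move=> indB vB c; rewrite mul_col_mx1.
have [c20|c2n] := eqVneq (rsubmx c 0 0) 0.
  rewrite c20 scale0r addr0 => /indB c10.
  by rewrite -[c]hsubmxK c10 [rsubmx c]mx11_scalar c20 raddf0 row_mx0.
move=> /eqP; rewrite addrC addr_eq0 => /eqP vc; case: vB.
exists (- ((rsubmx c 0 0)^-1 *: lsubmx c)).
by rewrite mulNmx -scalemxAl -scalerN -vc scalerA (mulVr (unitR c2n)) scale1r.
Qed.

Lemma line_subsp v : v != 0 -> is_subsp_dim 1 (fun u => exists c : 'rV[R]_1, u = c *m v).
Proof.
move=> v0; exists v; split=> // c.
have [l vl|v_0] := pickP (fun l => v 0 l != 0); last first.
  by case/eqP: v0; apply/rowP => l; rewrite mxE; move/negbFE/eqP: (v_0 l).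
rewrite [c]mx11_scalar mul_scalar_mx => /rowP /(_ l); rewrite !mxE => cv.
by rewrite -(mulrK (unitR vl) (c 0 0)) cv mul0r raddf0.
Qed.

Lemma Subsp_ext a b : sdim a = sdim b -> (forall v, sset a v <-> sset b v) -> a = b.
Proof.
case: a b => da sa oka pa [db sb okb pb] /= eqd eqs; subst db.
have eqS : sa = sb by apply: functional_extensionality => v; apply: propositional_extensionality.
by subst sb; f_equal; apply: proof_irrelevance.
Qed.

Lemma Sinc_sub a b : (sdim a < sdim b)%N -> Sinc a b -> forall v, sset a v -> sset b v.
Proof.
move=> lt_ab [//|ba]; have := subsp_dim_le (sset_ok a) (sset_ok b) ba.
by rewrite leqNgt lt_ab.
Qed.

Lemma sset0 p : sset p 0.
Proof. by have [B [_ defp]] := sset_ok p; apply/defp; exists 0; rewrite mul0mx. Qed.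

Lemma sset_add p u v : sset p u -> sset p v -> sset p (u + v).
Proof.
have [B [_ defp]] := sset_ok p => /defp[c1 ->] /defp[c2 ->]; apply/defp.
by exists (c1 + c2); rewrite mulmxDl.
Qed.

Lemma sset_scale p t v : sset p v -> sset p (t *: v).
Proof.
have [B [_ defp]] := sset_ok p => /defp[c ->]; apply/defp.
by exists (t *: c); rewrite scalemxAl.
Qed.

Hypothesis n_ge3 : (3 <= n)%N.

Lemma hyperplane_eq_points p q : sdim p = (n - 1)%N -> sdim q = (n - 1)%N ->
  (forall s, sdim s = 1%N -> (Sinc p s <-> Sinc q s)) -> p = q.
Proof.
suff sub_pq a b : sdim a = (n - 1)%N -> sdim b = (n - 1)%N ->
    (forall s, sdim s = 1%N -> Sinc a s -> Sinc b s) -> forall v, sset a v -> sset b v.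
  move=> dp dq pq; apply: Subsp_ext; first by rewrite dp dq.
  by move=> v; split; apply: sub_pq => // s s1; case: (pq s s1).
move=> da db ab v av; have [->|v0] := eqVneq v 0; first exact: sset0.
have dim1 : (0 < 1 < n)%N by lia.
pose L := MkSub dim1 (line_subsp v0).
have : Sinc b L.
  apply: ab => //; right => _ [c ->] /=.
  by rewrite [c]mx11_scalar mul_scalar_mx; exact: sset_scale.
case=> [Lb|bL]; last by apply: bL; exists 1%:M; rewrite mul1mx.
have := subsp_dim_le (line_subsp v0) (sset_ok b) Lb; rewrite db; lia.
Qed.

(* Both hyperplanes are the span of [s] and [v]. *)
Lemma hyperplane_codim2_eq s p q v : sdim s = (n - 2)%N ->
  sdim p = (n - 1)%N -> sdim q = (n - 1)%N ->
  (forall u, sset s u -> sset p u) -> (forall u, sset s u -> sset q u) ->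
  sset p v -> sset q v -> ~ sset s v -> p = q.
Proof.
move=> ds dp dq sp sq pv qv sv.
have [Bs [indBs defs]] := sset_ok s; rewrite ds in Bs indBs defs *.
have indU : rows_indep (col_mx Bs v).
  by apply: rows_indep_col_mx => // -[c vc]; apply: sv; apply/defs; exists c.
suff defH h : sdim h = (n - 1)%N -> (forall u, sset s u -> sset h u) -> sset h v ->
    forall u, sset h u <-> exists c, u = c *m col_mx Bs v.
  apply: Subsp_ext; first by rewrite dp dq.
  by move=> u; rewrite (defH p) // (defH q).
move=> dh sh hv u; split=> [hu|[c ->]]; last first.
  rewrite mul_col_mx1; apply: sset_add; last exact: sset_scale.
  by apply/sh/defs; exists (lsubmx c).
apply: NNPP => Uu; have indU' := rows_indep_col_mx indU Uu.
have Uh : forall w, (exists c, w = c *m col_mx (col_mx Bs v) u) -> sset h w.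
  move=> _ [c ->]; rewrite mul_col_mx1; apply: sset_add; last exact: sset_scale.
  rewrite mul_col_mx1; apply: sset_add; last exact: sset_scale.
  by apply/sh/defs; exists (lsubmx (lsubmx c)).
have dimU : is_subsp_dim (n - 2 + 1 + 1)
    (fun w => exists c, w = c *m col_mx (col_mx Bs v) u) by exists (col_mx (col_mx Bs v) u).
have := subsp_dim_le (sset_ok h) dimU Uh; rewrite dh; lia.
Qed.

Lemma codim2_in_hyperplanes_uniq p q s s' : p <> q ->
  sdim p = (n - 1)%N -> sdim q = (n - 1)%N -> sdim s = (n - 2)%N -> sdim s' = (n - 2)%N ->
  (forall v, sset s v -> sset p v) -> (forall v, sset s v -> sset q v) ->
  (forall v, sset s' v -> sset p v) -> (forall v, sset s' v -> sset q v) -> s = s'.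
Proof.
move=> pq dp dq ds ds' sp sq s'p s'q.
have sub a b : sdim b = (n - 2)%N -> (forall v, sset b v -> sset p v) ->
    (forall v, sset b v -> sset q v) -> (forall v, sset a v -> sset p v) ->
    (forall v, sset a v -> sset q v) -> forall v, sset a v -> sset b v.
  move=> db bp bq ap aq v av; apply: NNPP => bv; apply: pq.
  exact: (hyperplane_codim2_eq db dp dq bp bq (ap v av) (aq v av)).
apply: Subsp_ext; first by rewrite ds ds'.
by move=> v; split; apply: sub.
Qed.

End Subspaces.

Local Close Scope ring_scope.

Lemma neq_modn_window N s t : s < t < s + N -> s %% N <> t %% N.
Proof.
move=> lt_st e; have : s + (t - s) == s + 0 %[mod N] by rewrite addn0 subnKC ?e //; lia.
by rewrite eqn_modDl mod0n modn_small; lia.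
Qed.

Lemma modnS_wrap N t : 0 < N -> t.+1 %% N = if (t %% N).+1 == N then 0 else (t %% N).+1.
Proof.
move=> N0; rewrite -addn1 -modnDml addn1.
case: eqP => [->|ne]; first exact: modnn.
by apply: modn_small; have := ltn_pmod t N0; lia.
Qed.

Section Extension.
Variables (R : unitRingType) (n m : nat) (W : Type) (tau : W -> nat)
  (inc : W -> W -> Prop) (emb : Subsp R n -> W) (z x y x1e xm2e : W)
  (pc : nat -> Subsp R n).
Local Notation V := (Subsp R n).
Local Notation raw := (raw W V).
Local Notation rv := (@Defs.rv R n m W tau x y x1e xm2e).
Local Notation ptyp := (@Defs.ptyp n W tau x).
Local Notation isNew := (@Defs.isNew n m W tau x y).
Local Notation valid := (@Defs.valid R n m W tau x y pc).
Local Notation tauR := (@Defs.tauR R n W tau x).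
Local Notation baseR := (@Defs.baseR R n m W tau inc emb x y x1e xm2e pc).
Local Notation incR := (@Defs.incR R n m W tau inc emb x y x1e xm2e pc).
Local Notation W' := (@Defs.W' R n m W tau x y pc).
Local Notation tau' := (@Defs.tau' R n m W tau x y pc).
Local Notation inc' := (@Defs.inc' R n m W tau inc emb x y x1e xm2e pc).
Local Notation emb' := (@Defs.emb' R n m W tau emb x y pc).
Local Notation prec := (@Defs.prec R n W tau inc emb).
Local Notation prec' := (@Defs.prec R n W' tau' inc' emb').
Local Notation res := (@Defs.res n W tau inc).

Hypothesis n_ge3 : 3 <= n.
Hypothesis m_ge4 : 4 <= m.
Hypothesis unitR : forall a : R, (a != 0)%R -> a \is a GRing.unit.
Hypothesis inc_sym : forall a b, inc a b -> inc b a.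
Hypothesis inc_type_eq : forall a b, tau a = tau b -> (inc a b <-> a = b).
Hypothesis emb_inj : injective emb.
Hypothesis tau_emb : forall v, tau (emb v) = sdim v.
Hypothesis inc_emb : forall u v, inc (emb u) (emb v) <-> Sinc u v.
Hypothesis HF : @propF n W tau inc.
Hypothesis HI : @propI n W tau.
Hypothesis HV : @propV R n W tau emb.
Hypothesis HP : @propP n W tau inc m.
Hypothesis HH : @propH R n W tau inc emb.
Hypothesis HC : @propC R n W tau inc emb.
Hypothesis tau_z : tau z = n - 2.
Hypothesis tau_x : tau x = n - 1 \/ tau x = n.
Hypothesis tau_y : tau y = n - 1 \/ tau y = n.
Hypothesis inc_xz : inc x z.
Hypothesis inc_yz : inc y z.
Hypothesis tau_xy : if odd m then tau x = tau y else tau x <> tau y.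
Hypothesis dist_xy : @dist_ge n W tau inc z m.+1 x y.
Hypothesis x1e_ok : tau x = n -> [/\ tau x1e = n - 1, inc x1e x, inc x1e z &
  forall w, tau w = n -> inc x1e w -> w = x].
Hypothesis xm2e_ok : tau y = n -> [/\ tau xm2e = n - 1, inc xm2e y, inc xm2e z &
  forall w, tau w = n -> inc xm2e w -> w = y].
Hypothesis pc_ok : forall i, i <= m - 1 -> ptyp i = n - 1 ->
  [/\ sdim (pc i) = n - 1, inc (emb (pc i)) z & forall w, rv i = Old w -> prec w (pc i)].
Hypothesis pc_inj : forall i j, i <= m - 1 -> j <= m - 1 ->
  ptyp i = n - 1 -> ptyp j = n - 1 -> pc i = pc j -> i = j.

Lemma inc_refl a : inc a a.
Proof. exact/inc_type_eq. Qed.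

(* The new vertices of gamma are exactly the x_i with lo < i < hi; the
   vertices x_lo and x_hi are old elements of type n-1. *)
Definition lo := if tau x == n then 1 else 0.
Definition hi := if tau y == n then m - 2 else m - 1.
Definition xlo := if tau x == n then x1e else x.
Definition xhi := if tau y == n then xm2e else y.

Lemma isNewE i : isNew i <-> lo < i < hi.
Proof.
rewrite /isNew /lo /hi; case: (tau x =P n) => ex; case: (tau y =P n) => ey.
all: split => [[h1 h2 h3 h4]|/andP[h1 h2]]; [apply/andP; split|split]; lia.
Qed.

Lemma hi_le : hi <= m - 1.
Proof. by rewrite /hi; case: eqP => _; lia. Qed.

Lemma lo_lt_hi : lo.+1 < hi.
Proof.
rewrite /lo /hi; case: (tau x =P n) => ex; case: (tau y =P n) => ey; try lia.
move: tau_xy; rewrite ex ey; case: ifP => [odd_m _|_ []//].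
have : m != 4 by apply: contraTneq odd_m => ->.
lia.
Qed.

Lemma rv_inner i : lo < i < hi -> rv i = PNew i.
Proof.
rewrite /lo /hi => /andP[h1 h2]; rewrite /rv.
case: (tau x =P n) h1 => ex h1; case: (tau y =P n) h2 => ey h2 /=.
all: do 2 (case: ifP => [/eqP ?|_]; [lia|]).
all: do 2 (case: ifP => [/andP[/eqP ? /eqP ?]|_]; [lia|]); done.
Qed.

Lemma rv_lo : rv lo = Old xlo.
Proof.
rewrite /rv /lo /xlo; case: (tau x =P n) => ex //=.
by case: ifP => [/eqP ?|_]; [lia|].
Qed.

Lemma rv_hi : rv hi = Old xhi.
Proof.
rewrite /rv /hi /xhi; case: (tau y =P n) => ey /=; last first.
  by case: ifP => [/eqP ?|_]; [lia|rewrite eqxx].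
do 2 (case: ifP => [/eqP ?|_]; [lia|]).
by case: ifP => [/andP[/eqP ? _]|_]; [lia|rewrite eqxx].
Qed.

Lemma rv_PNewK k i : rv k = PNew i -> k = i.
Proof. by rewrite /rv; do 4 case: ifP => _ //; case. Qed.

Lemma rv_neq_Att k i a : rv k <> Att i a.
Proof. by rewrite /rv; do 4 case: ifP => _ //. Qed.

Lemma ptyp_cases i : ptyp i = n - 1 \/ ptyp i = n.
Proof. by rewrite /ptyp; case: (odd i) => //; case: eqP => _; tauto. Qed.

Lemma ptyp_alternates i :
  (ptyp i = n - 1 /\ ptyp i.+1 = n) \/ (ptyp i = n /\ ptyp i.+1 = n - 1).
Proof. by rewrite /ptyp /=; case: (odd i) => /=; case: (tau x =P n) => e; lia. Qed.

Lemma tauR_rv i : i <= m - 1 -> tauR (rv i) = ptyp i.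
Proof.
move=> le_im; rewrite /rv /ptyp; case: ifP => [/eqP -> //|_].
case: ifP => [/eqP ->|_].
  rewrite oddB ?addbT /=; last lia.
  by move: tau_xy; case: (odd m) => /= h //; case: (tau x =P n) => e; lia.
case: ifP => [/andP[/eqP -> /eqP ex]|_]; first by rewrite ex eqxx; case: (x1e_ok ex).
case: ifP => [/andP[/eqP -> /eqP ey]|_] //=.
rewrite oddB ?addbF; last lia.
by case: (xm2e_ok ey) => -> _ _ _; move: tau_xy; case: (odd m) => h; case: (tau x =P n) => e; lia.
Qed.

Lemma valid_rv i : i <= m - 1 -> valid (rv i).
Proof. by move=> le_im; rewrite /rv; do 4 case: ifP => /eqP ? //; split; lia. Qed.

Lemma tau_xlo : tau xlo = n - 1.
Proof. by rewrite /xlo; case: (tau x =P n) => [/x1e_ok[]|]; case: tau_x. Qed.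

Lemma tau_xhi : tau xhi = n - 1.
Proof. by rewrite /xhi; case: (tau y =P n) => [/xm2e_ok[]|]; case: tau_y. Qed.

Lemma ptyp_lo : ptyp lo = n - 1.
Proof. by rewrite -tauR_rv ?rv_lo /= ?tau_xlo //; have := lo_lt_hi; have := hi_le; lia. Qed.

Lemma ptyp_hi : ptyp hi = n - 1.
Proof. by rewrite -tauR_rv ?rv_hi /= ?tau_xhi // hi_le. Qed.

Lemma incR_sym r s : incR r s -> incR s r.
Proof. by rewrite /incR; case=> [->|[rs|sr]]; tauto. Qed.

Lemma incR_Old a b : incR (Old a) (Old b) <-> inc a b.
Proof.
split=> [|ab]; last by right; left; exists b.
case=> [[->]|[[b' [[<-] //]]|[b' [[<-] /inc_sym //]]]]; exact: inc_refl.
Qed.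

Lemma incR_Old_PNew w i : incR (Old w) (PNew i) <-> baseR (PNew i) (Old w).
Proof. by split=> [[//|[[b []]|//]]|]; right; right. Qed.

Lemma incR_Old_Att w i a : incR (Old w) (Att i a) <-> tau w <= n - 2 /\ inc (emb a) w.
Proof.
split=> [|[tw aw]]; last by right; right; right; exists w.
by case=> [//|[[b []]|[//|[w' [[<-]]]]]].
Qed.

Lemma incR_PNew_low i w : lo < i < hi -> tau w <= n - 2 ->
  incR (PNew i) (Old w) <-> ptyp i = n \/ inc (emb (pc i)) w.
Proof.
move=> lt_i tw; have le_hi := hi_le.
have w_off k : k <= m - 1 -> Old w <> rv k.
  by move=> le_k ew; have := tauR_rv le_k; rewrite -ew /=; case: (ptyp_cases k); lia.
split=> [|iw]; last by right; left; right; right; left; exists w.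
case=> [//|[|[b []//]]].
case=> [/w_off|[/w_off|[[w' [[<-] [_ //]]]|[_ [a //]]]]]; lia.
Qed.

Lemma val_W'_inj (a b : W') : proj1_sig a = proj1_sig b -> a = b.
Proof. by case: a b => a pa [b pb] /= eab; subst b; congr exist; apply: proof_irrelevance. Qed.

Lemma tauR_high r : valid r -> (forall w, r <> Old w) -> tauR r = n - 1 \/ tauR r = n.
Proof. by case: r => [w _ /(_ w)|i _ _|i a _ _] //=; [exact: ptyp_cases|left]. Qed.

Lemma low_Old (r : W') : tau' r <= n - 2 -> exists w, proj1_sig r = Old w.
Proof.
case: r => r vr /= tr; apply: NNPP => r_new.
have [e|e] : tauR r = n - 1 \/ tauR r = n.
  by apply: (tauR_high vr) => w erw; apply: r_new; exists w.
all: by rewrite /tau' /= e in tr; lia.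
Qed.

Definition old' (w : W) : W' := exist valid (Old w) I.

Lemma prec'E (r : W') v : prec' r v <-> sdim v = n - 1 /\
  forall w, 1 <= tau w <= n - 2 -> (incR (proj1_sig r) (Old w) <-> inc (emb v) w).
Proof.
split; case=> dv rv_w; split=> // w tw.
  by have := rv_w (old' w) tw; rewrite /inc' /= incR_Old.
have [w0 ew] := low_Old (proj2 (andP tw)).
have tw0 : 1 <= tau w0 <= n - 2 by move: tw; rewrite /tau' ew.
by rewrite /inc' ew rv_w // /emb' /= incR_Old.
Qed.

Lemma prec'_Old (r : W') u v : proj1_sig r = Old u -> prec' r v <-> prec u v.
Proof.
move=> ru; rewrite prec'E ru; split; case=> dv uv; split=> // w tw.
  by rewrite -incR_Old; apply: uv.
by rewrite incR_Old; apply: uv.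
Qed.

Lemma prec'_PNew (r : W') i : proj1_sig r = PNew i -> ptyp i = n - 1 -> prec' r (pc i).
Proof.
case: r => r vr /= eri ti; subst r.
have lt_i : lo < i < hi by apply/isNewE.
have le_i : i <= m - 1 by have := hi_le; lia.
rewrite prec'E /=; split; first by case: (pc_ok le_i ti).
move=> w /andP[_ tw]; rewrite incR_PNew_low //.
by split=> [[|//]|]; [lia|right].
Qed.

Lemma prec'_Att (r : W') i a : proj1_sig r = Att i a -> prec' r a.
Proof.
case: r => r vr /= era; subst r; have [_ _ da _ _] := vr.
rewrite prec'E /=; split=> // w /andP[_ tw].
split=> [[//|[[//|[w' [[<-] [_ //]]]]|[b []//]]]|aw].
by right; left; right; exists w.
Qed.

Lemma prec'_uniq (r : W') v1 v2 : prec' r v1 -> prec' r v2 -> v1 = v2.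
Proof.
rewrite !prec'E => -[d1 r1] [d2 r2].
apply: (hyperplane_eq_points unitR n_ge3) => // s ds.
have ts : 1 <= tau (emb s) <= n - 2 by rewrite tau_emb ds; lia.
by rewrite -!inc_emb -r1 // -r2.
Qed.

Lemma prec'_rv (r : W') k : k <= m - 1 -> ptyp k = n - 1 -> proj1_sig r = rv k ->
  prec' r (pc k).
Proof.
move=> le_k tk; case ek: (rv k) => [w|i|i a] erk.
- by rewrite (prec'_Old _ erk); case: (pc_ok le_k tk) => _ _; apply.
- by move/rv_PNewK: ek => eki; subst i; apply: prec'_PNew.
- by case: (rv_neq_Att ek).
Qed.

Lemma PNew_neighbour i s : lo < i < hi -> valid s -> tauR s = n - 1 \/ tauR s = n ->
  incR (PNew i) s -> s <> PNew i ->
  s = rv i.-1 \/ s = rv i.+1 \/ exists a, s = Att i a.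
Proof.
move=> lt_i vs ts [->//|[rs|sr]] ns.
  case: rs => [->|[->|[[w [esw [tw _]]]|[_ [a ->]]]]]; [tauto|tauto| |by right; right; exists a].
  by subst s; move: ts => /=; lia.
case: s vs ts sr ns => [a|j|j a] vs ts.
- by case=> b [].
- have lt_j : lo < j < hi by apply/isNewE.
  case=> [eij|[eij|[[w []]|[_ [? //]]]]] //; move/esym/rv_PNewK: eij => eij.
    by right; left; rewrite rv_inner; [congr PNew|]; lia.
  by left; rewrite rv_inner; [congr PNew|]; lia.
- by case=> [[<-]|[w []//]]; right; right; exists a.
Qed.

Lemma Att_neighbour i a s : valid s -> tauR s = n - 1 \/ tauR s = n ->
  incR (Att i a) s -> s <> Att i a -> s = PNew i.
Proof.
move=> vs ts [->//|[rs|sr]] ns.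
  by case: rs => [//|[w [esw [tw _]]]]; subst s; move: ts => /=; lia.
case: s vs ts sr ns => [b|j|j b] vs ts.
- by case=> b' [].
- by case=> [/esym/rv_neq_Att|[/esym/rv_neq_Att|[[w []]|[_ [a' [<-]]]]]].
- by case=> [|[w []]].
Qed.

Lemma propF' : @propF n W' tau' inc'.
Proof.
move=> a b ta tb; have [w ea] := low_Old ta.
rewrite /inc' ea; move: ta; rewrite /tau' ea /= => tw.
case: b tb => -[w'|i|i a'] vb; rewrite /tau' /= => tb.
- by apply/incR_Old; apply: HF.
- by apply/incR_Old_PNew; right; right; left; exists w; split=> //; split; [lia|left].
- lia.
Qed.

Lemma propV' : @propV R n W' tau' emb'.
Proof.
case=> -[w|i|i a] vr emb'_r /=; [|exact: ptyp_cases|by left].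
by apply: HV => v evw; apply: (emb'_r v); apply: val_W'_inj; rewrite /= evw.
Qed.

Lemma propH' : @propH R n W' tau' inc' emb'.
Proof.
case=> -[w|i|i a] vr /= tr.
- by have [v wv] := HH tr; exists v; apply/(prec'_Old (r := exist _ (Old w) vr)).
- by exists (pc i); apply: prec'_PNew.
- by exists a; apply: prec'_Att.
Qed.

Definition code (f : W -> nat) (r : raw) : (nat + nat) + (nat * nat) :=
  match r with
  | Old w => inl (inl (f w))
  | PNew i => inl (inr i)
  | Att i a => inr (i, f (emb a))
  end.

Lemma propI' : @propI n W' tau'.
Proof.
have [[l type_n_l] [f inj_f]] := HI; split.
  pose newv i : list W' := if excluded_middle_informative (valid (PNew i)) is left vi
    then exist _ (PNew i) vi :: nil else nil.
  exists (List.map old' l ++ List.flat_map newv (List.seq 0 m))%list.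
  case=> -[w|i|i a] vr; rewrite /tau' /= => tr; apply: List.in_or_app.
  - left; have -> : exist valid (Old w) vr = old' w by apply: val_W'_inj.
    exact/List.in_map/type_n_l.
  - right; apply/List.in_flat_map; exists i; split.
      by apply/List.in_seq; have := hi_le; have /isNewE := vr; lia.
    by rewrite /newv; case: excluded_middle_informative => // vi; left; apply: val_W'_inj.
  - lia.
exists (fun r : W' => pickle (code f (proj1_sig r))) => a b /(pcan_inj pickleK) eab.
apply: val_W'_inj; move: eab.
case: (proj1_sig a) (proj1_sig b) => [w|i|i u] [w'|i'|i' u'] //=.
- by case=> /inj_f ->.
- by case=> ->.
- by case=> -> /inj_f /emb_inj ->.
Qed.

Lemma rv_type_n k : lo <= k <= hi -> ptyp k = n -> rv k = PNew k.
Proof.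
move=> le_k tk; apply: rv_inner.
have k_lo : k <> lo by move=> ekl; have := ptyp_lo; rewrite -ekl; lia.
have k_hi : k <> hi by move=> ekh; have := ptyp_hi; rewrite -ekh; lia.
lia.
Qed.

Lemma Old_type_n_neighbour w s : tau w = n -> valid s -> tauR s = n - 1 ->
  incR (Old w) s -> exists u, s = Old u.
Proof.
move=> tw; case: s => [u|j|j a] /= vs ts; [by exists u| |by case/incR_Old_Att; lia].
have lt_j : lo < j < hi by apply/isNewE.
have le_hi := hi_le; have := ptyp_alternates j; have := ptyp_alternates j.-1.
rewrite prednK; last lia.
move=> tj1 tj /incR_Old_PNew [ewj|[ewj|[[w' [[<-] [tw' _]]]|[tj' _]]]]; try lia.
all: by move: ewj; rewrite rv_type_n //; lia.
Qed.

Lemma propC_Old w (vw : valid (Old w)) v : tau w = n -> sdim v = n - 1 ->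
  exists! u : W', tau' u = n - 1 /\ prec' u v /\ inc' (exist _ (Old w) vw) u.
Proof.
move=> tw dv; have [u [[tu [uv wu]] u_uniq]] := HC tw dv.
exists (old' u); split.
  by split=> //; split; [apply/(prec'_Old (r := old' u))|apply/incR_Old].
case=> r vr [tr [rv' wr]]; apply: val_W'_inj => /=.
have [u' eru'] := Old_type_n_neighbour tw vr tr wr; subst r.
congr Old; apply: u_uniq; split=> //; split; last exact/incR_Old.
exact/(prec'_Old (r := exist _ (Old u') vr)).
Qed.

Lemma PNew_type_n_neighbour i (vi : valid (PNew i)) (u : W') v : ptyp i = n ->
  tau' u = n - 1 -> prec' u v -> inc' (exist _ (PNew i) vi) u ->
  [\/ proj1_sig u = rv i.-1 /\ v = pc i.-1, proj1_sig u = rv i.+1 /\ v = pc i.+1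
    | proj1_sig u = Att i v].
Proof.
have lt_i : lo < i < hi by apply/isNewE.
have le_hi := hi_le; move=> ti; case: u => r vr /= tr rv' ir.
have nri : r <> PNew i by move=> eri; move: tr; rewrite /tau' /= eri /=; lia.
have := ptyp_alternates i; have := ptyp_alternates i.-1; rewrite prednK; last lia.
move=> ti1 ti2; case: (PNew_neighbour lt_i vr (or_introl tr) ir nri) => [eri|[eri|[a eri]]].
- constructor 1; split=> //; apply: (prec'_uniq rv').
  by apply: (prec'_rv (r := exist _ r vr) _ _ eri); lia.
- constructor 2; split=> //; apply: (prec'_uniq rv').
  by apply: (prec'_rv (r := exist _ r vr) _ _ eri); lia.
- constructor 3; rewrite eri; congr Att; apply: (prec'_uniq _ rv').
  exact: (prec'_Att (r := exist _ r vr) eri).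
Qed.

Lemma propC_PNew i (vi : valid (PNew i)) v : ptyp i = n -> sdim v = n - 1 ->
  exists! u : W', tau' u = n - 1 /\ prec' u v /\ inc' (exist _ (PNew i) vi) u.
Proof.
have lt_i : lo < i < hi by apply/isNewE.
have le_hi := hi_le; move=> ti dv.
have := ptyp_alternates i; have := ptyp_alternates i.-1; rewrite prednK; last lia.
move=> ti1 ti2; pose P (u : W') := tau' u = n - 1 /\ prec' u v /\ inc' (exist _ (PNew i) vi) u.
have P_uniq u1 u2 : P u1 -> P u2 -> u1 = u2.
  move=> [t1 [p1 i1]] [t2 [p2 i2]]; apply: val_W'_inj.
  have pc_neq : pc i.-1 <> pc i.+1 by move=> /pc_inj; lia.
  have Att_v (u : W') : proj1_sig u = Att i v -> v <> pc i.-1 /\ v <> pc i.+1.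
    by case: u => r vr /= eru; rewrite eru in vr; case: vr.
  case: (PNew_type_n_neighbour ti t1 p1 i1) => [[e1 v1]|[e1 v1]|e1];
  case: (PNew_type_n_neighbour ti t2 p2 i2) => [[e2 v2]|[e2 v2]|e2]; rewrite ?e1 ?e2 //.
  - by case: pc_neq; rewrite -v1 -v2.
  - by case: (Att_v _ e2); rewrite v1.
  - by case: pc_neq; rewrite -v1 -v2.
  - by case: (Att_v _ e2); rewrite v1.
  - by case: (Att_v _ e1); rewrite v2.
  - by case: (Att_v _ e1); rewrite v2.
have P_rv k (le_k : k <= m - 1) : k = i.-1 \/ k = i.+1 -> v = pc k ->
    P (exist _ (rv k) (valid_rv le_k)).
  move=> ek ev; rewrite /P ev; have tk : ptyp k = n - 1 by case: ek => ->; lia.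
  split; first by rewrite /tau' /= tauR_rv.
  split; first exact: (prec'_rv (r := exist _ _ _)).
  by rewrite /inc' /=; right; left; case: ek => ->; [left|right; left].
case: (classic (v = pc i.-1)) => [v_i1|nv_i1].
  have le_k : i.-1 <= m - 1 by lia.
  have Pu := P_rv _ le_k (or_introl erefl) v_i1.
  by exists (exist _ _ (valid_rv le_k)); split=> // u; apply: P_uniq.
case: (classic (v = pc i.+1)) => [v_i2|nv_i2].
  have le_k : i.+1 <= m - 1 by lia.
  have Pu := P_rv _ le_k (or_intror erefl) v_i2.
  by exists (exist _ _ (valid_rv le_k)); split=> // u; apply: P_uniq.
have va : valid (Att i v) by [].
have Pa : P (exist _ (Att i v) va).
  split=> //; split; first exact: (prec'_Att (r := exist _ (Att i v) va)).
  by right; left; right; right; right; split=> //; exists v.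
by exists (exist _ (Att i v) va); split=> // u; apply: P_uniq.
Qed.

Lemma propC' : @propC R n W' tau' inc' emb'.
Proof.
case=> -[w|i|i a] vr; rewrite /tau' /= => tr v dv; [exact: propC_Old|exact: propC_PNew|lia].
Qed.

Record cycle_at (F : nat -> raw) (N : nat) (z' : W) : Prop := CycleAt {
  cycle_len : 4 <= N;
  cycle_valid : forall t, valid (F t);
  cycle_type : forall t, tauR (F t) = n - 1 \/ tauR (F t) = n;
  cycle_centre : forall t, incR (F t) (Old z');
  cycle_step : forall t, incR (F t) (F t.+1);
  cycle_inj : forall s t, s < t < s + N -> F s <> F t;
  cycle_period : forall t, F (t + N) = F t }.

Section Cycle.
Variables (F : nat -> raw) (N : nat) (z' : W).
Hypothesis C : cycle_at F N z'.

Lemma cycle_prev t : incR (F t) (F (t + N - 1)).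
Proof.
have N4 := cycle_len C; have := cycle_step C (t + N - 1).
have -> : (t + N - 1).+1 = t + N by lia.
by rewrite (cycle_period C) => /incR_sym.
Qed.

Lemma cycle_neq_Att t i a : F t <> Att i a.
Proof.
have N4 := cycle_len C; move=> eFt.
have Att_nb s : incR (Att i a) (F s) -> t < s < t + N -> F s = PNew i.
  move=> ias lt_s; apply: Att_neighbour (cycle_valid C s) (cycle_type C s) ias _.
  by rewrite -eFt => est; apply: (cycle_inj C lt_s); rewrite est.
have e1 : F t.+1 = PNew i by apply: Att_nb; [rewrite -eFt; exact: (cycle_step C)|lia].
have e2 : F (t + N - 1) = PNew i by apply: Att_nb; [rewrite -eFt; exact: cycle_prev|lia].
by apply: (cycle_inj C (s := t.+1) (t := t + N - 1)); [lia|rewrite e1 e2].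
Qed.

Lemma cycle_at_PNew j i : F j = PNew i ->
  (F j.+1 = rv i.-1 /\ F (j + N - 1) = rv i.+1) \/
  (F j.+1 = rv i.+1 /\ F (j + N - 1) = rv i.-1).
Proof.
have N4 := cycle_len C; move=> eFj.
have lt_i : lo < i < hi by apply/isNewE; have := cycle_valid C j; rewrite eFj.
have nb s : incR (F j) (F s) -> F j <> F s -> F s = rv i.-1 \/ F s = rv i.+1.
  rewrite eFj => ijs ns.
  have [e|[e|[a e]]] := PNew_neighbour lt_i (cycle_valid C s) (cycle_type C s) ijs (nesym ns).
  - by left.
  - by right.
  - by case: (cycle_neq_Att e).
have [e1|e1] := nb _ (cycle_step C j) (cycle_inj C (s := j) (t := j.+1) ltac:(lia)).
all: have [e2|e2] := nb _ (cycle_prev j) (cycle_inj C (s := j) (t := j + N - 1) ltac:(lia)).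
all: try tauto.
all: by case: (cycle_inj C (s := j.+1) (t := j + N - 1)); [lia|rewrite e1 e2].
Qed.

Lemma cycle_follows_gamma j i : F j = PNew i -> F j.+1 = rv i.+1 ->
  forall s, i + s <= hi -> F (j + s) = rv (i + s).
Proof.
have N4 := cycle_len C; move=> eFj eFj1.
have lt_i : lo < i < hi by apply/isNewE; have := cycle_valid C j; rewrite eFj.
have step s : i + s < hi -> F (j + s) = rv (i + s) /\ F (j + s).+1 = rv (i + s).+1.
  elim: s => [|s IH] lt_s; first by rewrite !addn0 eFj rv_inner.
  have [e0 e1] := IH ltac:(lia).
  have eN : F (j + s.+1) = PNew (i + s.+1) by rewrite addnS e1 -addnS rv_inner //; lia.
  have [[e2 _]|[e2 _]] := cycle_at_PNew eN; last by rewrite eN rv_inner //; lia.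
  by case: (cycle_inj C (s := j + s) (t := (j + s.+1).+1)); [lia|rewrite e0 e2 addnS].
move=> s le_s; have [lt_s|eq_s] := ltnP (i + s) hi; first by case: (step s lt_s).
case: s le_s eq_s => [|s] le_s eq_s; first lia.
by have [_] := step s ltac:(lia); rewrite !addnS.
Qed.

End Cycle.

Lemma cycle_rev F N z' K : cycle_at F N z' -> N <= K ->
  cycle_at (fun t => F (K - t %% N)) N z'.
Proof.
move=> C le_NK; have N4 := cycle_len C; have N0 : 0 < N by lia.
split=> // [t|t|t|t|s t lt_st|t]; rewrite ?modnDr //.
- exact: cycle_valid C _.
- exact: cycle_type C _.
- exact: cycle_centre C _.
- rewrite (modnS_wrap t N0); have := ltn_pmod t N0; case: eqP => [e|ne] lt_t.
    have -> : K - t %% N = (K - N).+1 by lia.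
    have -> : K - 0 = K - N + N by lia.
    by rewrite (cycle_period C); apply/incR_sym/(cycle_step C).
  have -> : K - t %% N = (K - (t %% N).+1).+1 by lia.
  exact/incR_sym/(cycle_step C).
- have := neq_modn_window lt_st; have := ltn_pmod s N0; have := ltn_pmod t N0 => lt_t lt_s ne.
  have [lt_ts|le_st] := ltnP (K - s %% N) (K - t %% N).
    by apply: (cycle_inj C); lia.
  by apply/nesym/(cycle_inj C); lia.
Qed.

Definition traverses_gamma (F : nat -> raw) :=
  exists q, forall s, s <= hi - lo -> F (q + s) = rv (lo + s).

Lemma traverses_gamma_from F N z' (C : cycle_at F N z') t :
  F t = PNew lo.+1 -> F t.+1 = rv lo.+2 -> F (t + N - 1) = rv lo -> traverses_gamma F.
Proof.
move=> e0 e1 eN; have N4 := cycle_len C; exists (t + N - 1) => -[|s] le_s.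
  by rewrite !addn0.
have -> : t + N - 1 + s.+1 = t + s + N by lia.
by rewrite (cycle_period C) (cycle_follows_gamma C e0 e1) ?addSnnS //; lia.
Qed.

Lemma cycle_traverses_gamma F N z' (C : cycle_at F N z') t0 : (forall w, F t0 <> Old w) ->
  exists G, cycle_at G N z' /\ traverses_gamma G.
Proof.
move=> F_new; have N4 := cycle_len C.
have to_first d t : F t = PNew (lo.+1 + d) -> exists t', F t' = PNew lo.+1.
  elim: d t => [|d IH] t eFt; first by exists t; rewrite addn0 in eFt.
  have lt_i : lo < lo.+1 + d.+1 < hi by apply/isNewE; have := cycle_valid C t; rewrite eFt.
  have eprev : rv (lo.+1 + d.+1).-1 = PNew (lo.+1 + d) by rewrite addnS rv_inner //; lia.
  by case: (cycle_at_PNew C eFt) => -[e1 e2]; [apply: (IH t.+1)|apply: (IH (t + N - 1))];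
    rewrite ?e1 ?e2.
have [t1 e1] : exists t1, F t1 = PNew lo.+1.
  case eF: (F t0) => [w|i|i a]; [by case: (F_new w)| |by case: (cycle_neq_Att C eF)].
  have lt_i : lo < i < hi by apply/isNewE; have := cycle_valid C t0; rewrite eF.
  by apply: (to_first (i - lo.+1) t0); rewrite eF; congr PNew; lia.
case: (cycle_at_PNew C e1) => -[ea eb]; last first.
  by exists F; split=> //; apply: (traverses_gamma_from C e1 ea); rewrite eb.
pose G t := F (t1 + N - t %% N).
have CG : cycle_at G N z' by apply: (cycle_rev C); lia.
exists G; split=> //; apply: (traverses_gamma_from CG (t := 0)).
- by rewrite /G mod0n subn0 (cycle_period C).
- by rewrite /G modn_small ?eb //; lia.
- by rewrite /G add0n modn_small; [have -> : t1 + N - (N - 1) = t1.+1 by lia|lia].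
Qed.

Lemma x_y_far : x <> y /\ ~ inc x y.
Proof.
have rx : res z x by split.
have ry : res z y by split.
split=> [exy|ixy].
  by apply: (dist_xy (l := 0)) => //; exists (fun _ => x); split=> //; split=> //; split.
apply: (dist_xy (l := 1)); first lia.
exists (fun u => if u == 0 then x else y).
by split=> //; split=> //; split=> [[|[|u]] //|[|u] //].
Qed.

Lemma xlo_neq_xhi : xlo <> xhi.
Proof.
have [nxy nixy] := x_y_far.
rewrite /xlo /xhi; case: (tau x =P n) => ex; case: (tau y =P n) => ey exy.
- have [_ _ _ u1] := x1e_ok ex; have [_ i2 _ _] := xm2e_ok ey.
  by apply/nxy/esym/u1; rewrite ?exy.
- by have [_ i1 _ _] := x1e_ok ex; apply/nixy/inc_sym; rewrite -exy.
- by have [_ i2 _ _] := xm2e_ok ey; apply: nixy; rewrite exy.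
- exact: nxy.
Qed.

Lemma residue_step_type_n z' a b : tau a = n - 1 -> res z' b -> inc a b -> a <> b -> tau b = n.
Proof. by move=> ta [[tb|tb] _] // ab; case; apply/inc_type_eq; rewrite // ta tb. Qed.

Lemma walk_lo_x (h : nat -> W) : h 0 = xlo -> res z (h 1) ->
  inc (h 0) (h 1) -> h 0 <> h 1 -> h lo = x.
Proof.
rewrite /lo /xlo; case: (tau x =P n) => // /x1e_ok[t1e _ _ uniq1] -> r1 i01 n01.
by apply: uniq1 (residue_step_type_n t1e r1 i01 n01) i01.
Qed.

Lemma walk_hi_y L (h : nat -> W) : 0 < L -> h L = xhi -> res z (h L.-1) ->
  inc (h L.-1) (h L) -> h L.-1 <> h L -> h (L - (tau y == n)) = y.
Proof.
rewrite /xhi => L0.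
case: (tau y =P n) => [/xm2e_ok[t2e _ _ uniq2]|_] hL; last by rewrite subn0 hL.
move=> r1 i01 n01; rewrite subn1; apply: uniq2; last by apply: inc_sym; rewrite -hL.
by apply: residue_step_type_n t2e r1 _ _; rewrite -hL; [apply: inc_sym|apply: nesym].
Qed.

(* Dropping x_lo and x_hi where they differ from x and y leaves a walk from x to y
   of length at most m. *)
Lemma walk_xlo_xhi_long L (h : nat -> W) : h 0 = xlo -> h L = xhi ->
  (forall u, u < L -> inc (h u) (h u.+1) /\ h u <> h u.+1) ->
  (forall u, u <= L -> res z (h u)) -> 2 * m - 2 < L + (hi - lo).
Proof.
move=> h0 hL step rh; rewrite ltnNge; apply/negP => short.
have L0 : 0 < L by case: L hL {short step rh} => // hL; case: xlo_neq_xhi; rewrite -h0 -hL.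
have [i01 n01] := step 0 L0; have [iL nL] := step L.-1 ltac:(lia).
rewrite prednK // in iL nL.
have hlo := walk_lo_x h0 (rh 1 L0) i01 n01.
have hb := walk_hi_y L0 hL (rh _ (leq_pred L)) iL nL.
set b := L - (tau y == n) in hb.
have le_lo_b : lo <= b.
  case: (leqP lo b) => // lt_b; exfalso.
  have lo_le1 : lo <= 1 by rewrite /lo; case: eqP.
  have [L1 lo1] : L = 1 /\ lo = 1 by move: lt_b; rewrite /b; case: (tau y == n) => /=; lia.
  have := tau_xhi; rewrite -hL L1 -{1}lo1 hlo.
  by move: lo1; rewrite /lo; case: eqP => // ->; lia.
apply: (dist_xy (l := b - lo)).
  by move: short; rewrite /b /hi; case: (tau y == n); lia.
exists (fun u => h (lo + u)); split; first by rewrite addn0.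
split; first by rewrite subnKC.
split=> u le_u; first by apply: rh; lia.
by rewrite addnS; apply: (step _ _).1; lia.
Qed.

Lemma type_n2_emb w : tau w = n - 2 -> exists s, emb s = w.
Proof.
move=> tw; apply: NNPP => not_emb.
by case: (HV (w := w)) => [v evw|e|e]; [apply: not_emb; exists v|lia|lia].
Qed.

(* x_lo and x_hi have distinct precursors, i.e. distinct hyperplanes, which
   share at most one (n-2)-space: the one of z. *)
Lemma residue_centre_eq z' : tau z' = n - 2 -> inc xlo z' -> inc xhi z' -> z' = z.
Proof.
move=> tz' lo_z' hi_z'; have := lo_lt_hi; have := hi_le => le_hi lt_lohi.
have [d_lo lo_z lo_prec] := pc_ok (i := lo) ltac:(lia) ptyp_lo.
have [d_hi hi_z hi_prec] := pc_ok (i := hi) ltac:(lia) ptyp_hi.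
have pc_lo_z' : inc (emb (pc lo)) z' by rewrite -(lo_prec _ rv_lo).2 //; lia.
have pc_hi_z' : inc (emb (pc hi)) z' by rewrite -(hi_prec _ rv_hi).2 //; lia.
have [s es] := type_n2_emb tau_z; have [s' es'] := type_n2_emb tz'.
have ds : sdim s = n - 2 by rewrite -tau_emb es.
have ds' : sdim s' = n - 2 by rewrite -tau_emb es'.
rewrite -es -es' in lo_z hi_z pc_lo_z' pc_hi_z' *.
have sub a b : sdim a = n - 2 -> sdim b = n - 1 -> inc (emb b) (emb a) ->
    forall v, sset a v -> sset b v.
  move=> da db /inc_emb ba; apply: (Sinc_sub unitR); first lia.
  by case: ba; [right|left].
congr emb; apply: (codim2_in_hyperplanes_uniq unitR n_ge3 (p := pc lo) (q := pc hi)) => //.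
- by move/(pc_inj (i := lo) (j := hi)) => /(_ _ _ ptyp_lo ptyp_hi); lia.
all: exact: sub.
Qed.

Lemma cycle_off_gamma_Old G N z' q : cycle_at G N z' -> hi - lo < N ->
  (forall s, s <= hi - lo -> G (q + s) = rv (lo + s)) ->
  forall u, u <= N - (hi - lo) -> exists w, G (q + (hi - lo) + u) = Old w.
Proof.
move=> C lt_N Gq u le_u; case eG: (G (q + (hi - lo) + u)) => [w|i|i a]; first by exists w.
  have lt_i : lo < i < hi by apply/isNewE; have := cycle_valid C (q + (hi - lo) + u); rewrite eG.
  have := Gq (i - lo) ltac:(lia); rewrite subnKC ?rv_inner; try lia.
  move=> eGi; case: (cycle_inj C (s := q + (i - lo)) (t := q + (hi - lo) + u)).
    by have := cycle_len C; lia.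
  by rewrite eGi eG.
by case: (cycle_neq_Att C eG).
Qed.

Lemma no_cycle_traverses_gamma G N z' : cycle_at G N z' -> tau z' = n - 2 ->
  N <= 2 * m - 2 -> ~ traverses_gamma G.
Proof.
move=> C tz' le_N [q Gq]; have N4 := cycle_len C.
have := lo_lt_hi; have := hi_le => le_hi lt_lohi.
set D := hi - lo in Gq *.
have lt_DN : D < N.
  rewrite ltnNge; apply/negP => le_ND.
  have := Gq N le_ND; rewrite (cycle_period C) -[q]addn0 Gq // addn0 rv_lo.
  have [lt_h|le_h] := ltnP (lo + N) hi; first by rewrite rv_inner //; lia.
  have -> : lo + N = hi by lia.
  by rewrite rv_hi => -[]; exact: xlo_neq_xhi.
pose g u := if G (q + D + u) is Old w then w else z.
have Gg u : u <= N - D -> G (q + D + u) = Old (g u).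
  by move=> le_u; rewrite /g; case: (cycle_off_gamma_Old C lt_DN Gq le_u) => w ->.
set L := N - D in Gg.
have g0 : g 0 = xhi.
  by have := Gg 0 (leq0n _); rewrite addn0 Gq // /D subnKC ?rv_hi; [case|lia].
have gL : g L = xlo.
  have := Gg L (leqnn _); rewrite -addnA /L subnKC; last lia.
  by rewrite (cycle_period C) -[q]addn0 Gq // addn0 rv_lo; case.
have g_z' u : u <= L -> inc (g u) z'.
  by move=> le_u; have := cycle_centre C (q + D + u); rewrite Gg // incR_Old.
have ez : z' = z by apply: residue_centre_eq; rewrite // -?gL -?g0; apply: g_z'; lia.
subst z'.
have g_step u : u < L -> inc (g u) (g u.+1) /\ g u <> g u.+1.
  move=> lt_u; have := cycle_step C (q + D + u); rewrite -addnS !Gg ?incR_Old; try lia.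
  split=> // egu; case: (cycle_inj C (s := q + D + u) (t := q + D + u.+1)); first lia.
  by rewrite !Gg ?egu //; lia.
have := walk_xlo_xhi_long (L := L) (h := fun u => g (L - u)).
rewrite subn0 subnn => /(_ gL g0) long.
have : 2 * m - 2 < L + D; last by rewrite /L; lia.
apply: long => u le_u.
  have [i1 n1] := g_step (L - u.+1) ltac:(lia).
  have -> : L - u = (L - u.+1).+1 by lia.
  by split; [apply: inc_sym|apply: nesym].
split; last exact: g_z' (leq_subr _ _).
by have := cycle_type C (q + D + (L - u)); rewrite Gg ?leq_subr.
Qed.

Lemma cycle_of_kgon z2 k (f : nat -> W') : tau' z2 = n - 2 -> 2 <= k ->
  (forall i j, i < 2 * k -> j < 2 * k -> f i = f j -> i = j) ->
  (forall i, i < 2 * k -> @Defs.res n W' tau' inc' z2 (f i)) ->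
  (forall i, i < 2 * k -> inc' (f i) (f (i.+1 %% (2 * k)))) ->
  exists2 z', proj1_sig z2 = Old z' &
    cycle_at (fun t => proj1_sig (f (t %% (2 * k)))) (2 * k) z'.
Proof.
move=> tz2 k2 f_inj f_res f_step; have N0 : 0 < 2 * k by lia.
have [z' ez'] := low_Old (r := z2) ltac:(lia); exists z' => //.
split=> [|t|t|t|t|s t lt_st|t]; rewrite ?modnDr //; try lia.
- exact: proj2_sig (f _).
- exact: (f_res _ (ltn_pmod _ N0)).1.
- by have := (f_res _ (ltn_pmod t N0)).2; rewrite /inc' ez'.
- have -> : t.+1 %% (2 * k) = (t %% (2 * k)).+1 %% (2 * k) by rewrite -addn1 -modnDml addn1.
  exact/f_step/ltn_pmod.
- move=> /val_W'_inj /(f_inj _ _ (ltn_pmod _ N0) (ltn_pmod _ N0)).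
  exact: neq_modn_window lt_st.
Qed.

Lemma propP' : @propP n W' tau' inc' m.
Proof.
move=> z2 tz2 k /andP[k2 km] [f [f_inj [f_res f_step]]].
have [z' ez' C] := cycle_of_kgon tz2 k2 f_inj f_res f_step.
have tz' : tau z' = n - 2 by move: tz2; rewrite /tau' ez'.
case: (classic (exists t, forall w, proj1_sig (f (t %% (2 * k))) <> Old w)) => [[t0 F_new]|all_old].
  have [G [CG trG]] := cycle_traverses_gamma C F_new.
  by apply: (no_cycle_traverses_gamma CG tz' _ trG); lia.
pose g i := if proj1_sig (f i) is Old w then w else z.
have fg i : i < 2 * k -> proj1_sig (f i) = Old (g i).
  move=> lt_i; rewrite /g; case eg: (proj1_sig (f i)) => [w|j|j a] //;
  by case: all_old; exists i => w; rewrite modn_small // eg.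
apply: (HP tz' (k := k)); first by rewrite k2.
exists g; split=> [i j lt_i lt_j egij|].
  by apply: f_inj => //; apply: val_W'_inj; rewrite !fg // egij.
split=> i lt_i.
  have [tfi fi_z2] := f_res i lt_i.
  by move: tfi fi_z2; rewrite /tau' /inc' ez' fg // => ? /incR_Old.
by have := f_step i lt_i; rewrite /inc' !fg ?ltn_pmod //; [move/incR_Old|lia].
Qed.

Lemma props' : @props R n W' tau' inc' emb' m.
Proof. exact: conj propF' (conj propI' (conj propV' (conj propP' (conj propH' propC')))). Qed.

End Extension.

Theorem mainTheorem5 (R : unitRingType) (n m : nat)
  (W : Type) (tau : W -> nat) (inc : W -> W -> Prop) (emb : Subsp R n -> W)
  (z x y x1e xm2e : W) (pc : nat -> Subsp R n) :
  3 <= n -> 4 <= m ->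
  (forall a : R, (a != 0)%R -> a \is a GRing.unit) ->
  (exists f : nat -> R, injective f) -> (exists g : R -> nat, injective g) ->
  @is_geometry n W tau inc -> @induced_sub R n W tau inc emb ->
  @props R n W tau inc emb m ->
  tau z = n - 2 ->
  (tau x = n - 1 \/ tau x = n) -> (tau y = n - 1 \/ tau y = n) ->
  inc x z -> inc y z ->
  (if odd m then tau x = tau y else tau x <> tau y) ->
  @dist_ge n W tau inc z m.+1 x y ->
  @choices_ok R n m W tau inc emb z x y x1e xm2e pc ->
  @props R n (@W' R n m W tau x y pc)
    (@tau' R n m W tau x y pc)
    (@inc' R n m W tau inc emb x y x1e xm2e pc)
    (@emb' R n m W tau emb x y pc) m.
Proof.
move=> n_ge3 m_ge4 unitR _ _ [inc_sym [_ inc_type_eq]] [emb_inj [tau_emb inc_emb]].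
move=> [HF [HI [HV [HP [HH HC]]]]] tau_z tau_x tau_y inc_xz inc_yz tau_xy dist_xy.
move=> [x1e_ok [xm2e_ok [pc_ok pc_inj]]].
exact: (props' n_ge3 m_ge4 unitR inc_sym inc_type_eq emb_inj tau_emb inc_emb HF HI HV HP HH HC
  tau_z tau_x tau_y inc_xz inc_yz tau_xy dist_xy x1e_ok xm2e_ok pc_ok pc_inj).
Qed.
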